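(* Let $\omega_1\ne\omega_2$ be real, let $a$ be a real polynomial of degree $N-1\ge1$, and let $q_1,q_2,C_1,C_2\in\mathbb C$ satisfy, for all $t\in\mathbb R$, $$e^{-i\omega_1t}C_1+e^{-i\omega_2t}C_2=a\big(|q_1e^{-i\omega_1t}+q_2e^{-i\omega_2t}|^2\big)\big(q_1e^{-i\omega_1t}+q_2e^{-i\omega_2t}\big).$$ Then $q_1=0$ or $q_2=0$. *)

From Stdlib Require Import Reals.
Open Scope R_scope.

Definition Cplx : Type := (R * R)%type.
Definition Cadd (z w : Cplx) : Cplx := (fst z + fst w, snd z + snd w).
Definition Cmul (z w : Cplx) : Cplx :=
  (fst z * fst w - snd z * snd w, fst z * snd w + snd z * fst w).
Definition RtoC (x : R) : Cplx := (x, 0).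
Definition Cnorm2 (z : Cplx) : R := fst z * fst z + snd z * snd z.
Definition Cexpi (theta : R) : Cplx := (cos theta, sin theta).

Definition polyR (c : nat -> R) (d : nat) (x : R) : R :=
  sum_f_R0 (fun k => c k * x ^ k) d.

(* Dividing the identity by e^{-i w1 t} and letting t run over R (possible as
   w1 <> w2), it becomes C1 + z C2 = a(|q1 + z q2|^2) (q1 + z q2) for every unit
   complex z.  Now |q1 + z q2|^2 = |q1|^2 + |q2|^2 + 2 Re(z conj(q1 conj q2)); if
   q1, q2 <> 0 every value x close to |q1|^2 + |q2|^2 is attained at two distinct
   unit z, z', and subtracting the two identities gives C2 = a(x) q2.  So a is
   constant on an interval, which is impossible for a polynomial of degree >= 1. *)

From Stdlib Require Import Reals Lra Psatz.
From mathcomp Require all_boot all_algebra Rstruct.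
Open Scope R_scope.

(* Importing ssreflect globally would turn (1 <= d)%nat into a boolean
   comparison in the final statement, hence the local import. *)
Module PolyRoots.
Import all_boot all_algebra Rstruct GRing.Theory.

Lemma polyR_horner c d x : polyR c d x = (\poly_(i < d.+1) c i).[x]%R.
Proof.
rewrite horner_poly /polyR.
elim: d => [|d IH]; first by rewrite big_ord1 expr0.
by rewrite big_ord_recr /= -IH -RpowE.
Qed.

Lemma polyR_lead_eq0_of_const (c : nat -> R) d (x : nat -> R) K :
  Peano.le 1 d -> injective x -> (forall k, Peano.le k d -> polyR c d (x k) = K) ->
  c d = 0.
Proof.
move=> /leP d_gt0 x_inj xK; apply/eqP; apply: contraT => cd_neq0.
pose p := (\poly_(i < d.+1) c i - K%:P)%R.
have p_neq0 : p != 0%R.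
  apply: contraNneq cd_neq0 => p0.
  have := congr1 (fun q : {poly R} => q`_d)%R p0.
  by rewrite coefB coef_poly coefC ltnSn gtn_eqF // subr0 coef0 => /eqP.
have size_p : (size p <= d.+1)%N.
  rewrite (leq_trans (size_polyD _ _)) // geq_max size_poly size_polyN size_polyC.
  by case: (K != 0%R).
have p_roots : all (root p) [seq x k | k <- iota 0 d.+1].
  apply/allP => y /mapP [k]; rewrite mem_iota add0n => /andP [_ kd] ->.
  by rewrite /root /p hornerD hornerN hornerC -polyR_horner xK ?subrr //; exact/leP.
have := max_poly_roots p_neq0 p_roots.
by rewrite map_inj_uniq ?iota_uniq // size_map size_iota ltnNge size_p => /(_ isT).
Qed.

End PolyRoots.

Lemma polyR_lead_eq0_of_const_on_interval (c : nat -> R) (d : nat) (a b K : R) :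
  (1 <= d)%nat -> a < b -> (forall x, a < x < b -> polyR c d x = K) -> c d = 0.
Proof.
intros Hd Hab HK.
assert (Hpos : forall k, 2 <= INR (k + 2)).
{ intro k. rewrite plus_INR. pose proof (pos_INR k). simpl. lra. }
apply (PolyRoots.polyR_lead_eq0_of_const c d (fun k => a + (b - a) / INR (k + 2)) K Hd).
- intros i j Hij.
  assert (Hi := Hpos i). assert (Hj := Hpos j).
  assert (E : (b - a) / INR (i + 2) = (b - a) / INR (j + 2)) by lra.
  assert (E' : INR (i + 2) = INR (j + 2)).
  { replace (INR (i + 2)) with ((b - a) / ((b - a) / INR (i + 2))) by (field; lra).
    rewrite E. field. lra. }
  apply INR_eq in E'. lia.
- intros k _. apply HK.
  assert (Hk := Hpos k).
  assert (0 < (b - a) / INR (k + 2) < b - a); [|lra].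
  split; [apply Rdiv_lt_0_compat; lra|].
  apply (Rmult_lt_reg_r (INR (k + 2))); [lra|].
  field_simplify; nra.
Qed.

Definition Cconj (z : Cplx) : Cplx := (fst z, - snd z).
(* Cdot z w = Re (z * conj w). *)
Definition Cdot (z w : Cplx) : R := fst z * fst w + snd z * snd w.

Ltac Cplx_ring := unfold Cadd, Cmul, Cconj, RtoC; simpl; f_equal; ring.

Lemma Cnorm2_ge0 (z : Cplx) : 0 <= Cnorm2 z.
Proof. unfold Cnorm2. nra. Qed.

Lemma Cnorm2_eq0 (z : Cplx) : Cnorm2 z = 0 -> z = (0, 0).
Proof.
destruct z as [x y]; unfold Cnorm2; simpl; intro H.
assert (x = 0) by nra. assert (y = 0) by nra. now subst.
Qed.

Lemma Cnorm2_Cmul (z w : Cplx) : Cnorm2 (Cmul z w) = Cnorm2 z * Cnorm2 w.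
Proof. unfold Cnorm2, Cmul; simpl; ring. Qed.

Lemma Cnorm2_Cconj (z : Cplx) : Cnorm2 (Cconj z) = Cnorm2 z.
Proof. unfold Cnorm2, Cconj; simpl; ring. Qed.

Lemma Cnorm2_Cadd (z w : Cplx) : Cnorm2 (Cadd z w) = Cnorm2 z + Cnorm2 w + 2 * Cdot z w.
Proof. unfold Cnorm2, Cadd, Cdot; simpl; ring. Qed.

Lemma Cdot_Cmul_r (u z v : Cplx) : Cdot u (Cmul z v) = Cdot z (Cmul u (Cconj v)).
Proof. unfold Cdot, Cmul, Cconj; simpl; ring. Qed.

Lemma Cmul_cancel_l (u z w : Cplx) : Cnorm2 u <> 0 -> Cmul u z = Cmul u w -> z = w.
Proof.
intros Hu H.
assert (Hconj : forall v, Cmul (Cconj u) (Cmul u v) = Cmul (RtoC (Cnorm2 u)) v).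
{ intro v. unfold Cnorm2. Cplx_ring. }
apply (f_equal (Cmul (Cconj u))) in H. rewrite !Hconj in H.
destruct z as [z1 z2], w as [w1 w2]; unfold Cmul, RtoC in H; simpl in H.
injection H as H1 H2.
f_equal; apply (Rmult_eq_reg_l (Cnorm2 u)); lra.
Qed.

Lemma Cexpi_add (a b : R) : Cexpi (a + b) = Cmul (Cexpi a) (Cexpi b).
Proof. unfold Cexpi, Cmul; simpl. rewrite cos_plus, sin_plus. f_equal; ring. Qed.

Lemma Cnorm2_Cexpi (a : R) : Cnorm2 (Cexpi a) = 1.
Proof. unfold Cnorm2, Cexpi; simpl. rewrite Rplus_comm. exact (sin2_cos2 a). Qed.

Lemma Cexpi_surj (z : Cplx) : Cnorm2 z = 1 -> exists a, Cexpi a = z.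
Proof.
destruct z as [x y]; unfold Cnorm2, Cexpi; simpl; intro Hz.
assert (Hx : -1 <= x <= 1) by nra.
assert (Hy : sqrt (1 - x²) = Rabs y).
{ replace (1 - x²) with (y²) by (unfold Rsqr; lra). apply sqrt_Rsqr_abs. }
destruct (Rle_dec 0 y) as [Hy0|Hy0].
- exists (acos x). rewrite cos_acos, sin_acos, Hy, Rabs_right by lra. reflexivity.
- exists (- acos x). rewrite cos_neg, sin_neg, cos_acos, sin_acos, Hy, Rabs_left by lra.
  f_equal; ring.
Qed.

Lemma unit_circle_line_two_points (w : Cplx) (y : R) :
  y * y < Cnorm2 w ->
  exists z z', Cnorm2 z = 1 /\ Cnorm2 z' = 1 /\ z <> z' /\ Cdot z w = y /\ Cdot z' w = y.
Proof.
destruct w as [p q]; unfold Cnorm2, Cdot; simpl; intro Hy.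
set (n := p * p + q * q) in *.
set (s := sqrt (n - y * y)).
assert (Hs2 : s * s = n - y * y) by (apply sqrt_sqrt; lra).
assert (Hs : 0 < s) by (apply sqrt_lt_R0; lra).
assert (Hn : n <> 0) by nra.
(* z = (y +- i s) w / |w|^2, with s = sqrt (|w|^2 - y^2). *)
exists ((y * p - s * q) / n, (y * q + s * p) / n), ((y * p + s * q) / n, (y * q - s * p) / n).
simpl; repeat split.
- transitivity ((y * y + s * s) * n / (n * n)); [unfold n; field; exact Hn|].
  rewrite Hs2. field. exact Hn.
- transitivity ((y * y + s * s) * n / (n * n)); [unfold n; field; exact Hn|].
  rewrite Hs2. field. exact Hn.
- intro E. injection E as E1 E2.
  assert (s * q = 0).
  { replace (s * q) with (((y * p + s * q) / n - (y * p - s * q) / n) * n / 2)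
      by (field; exact Hn).
    rewrite E1. field. exact Hn. }
  assert (s * p = 0).
  { replace (s * p) with (((y * q + s * p) / n - (y * q - s * p) / n) * n / 2)
      by (field; exact Hn).
    rewrite E2. field. exact Hn. }
  apply Hn. unfold n. nra.
- unfold n; field. exact Hn.
- unfold n; field. exact Hn.
Qed.

Section OnUnitCircle.

Variables (f : R -> R) (q1 q2 C1 C2 : Cplx).

Hypothesis identity_on_circle : forall z, Cnorm2 z = 1 ->
  Cadd C1 (Cmul z C2)
  = Cmul (RtoC (f (Cnorm2 (Cadd q1 (Cmul z q2))))) (Cadd q1 (Cmul z q2)).

Lemma C2_eq_at_equal_norms (z z' : Cplx) :
  Cnorm2 z = 1 -> Cnorm2 z' = 1 -> z <> z' ->
  Cnorm2 (Cadd q1 (Cmul z q2)) = Cnorm2 (Cadd q1 (Cmul z' q2)) ->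
  C2 = Cmul (RtoC (f (Cnorm2 (Cadd q1 (Cmul z q2))))) q2.
Proof.
intros Hz Hz' Hzz' Hnorm.
pose proof (identity_on_circle z Hz) as H.
pose proof (identity_on_circle z' Hz') as H'.
rewrite <- Hnorm in H'.
set (g := f (Cnorm2 (Cadd q1 (Cmul z q2)))) in *.
set (delta := (fst z - fst z', snd z - snd z')).
(* The difference of the identities at z and z' reads delta C2 = g delta q2. *)
apply (Cmul_cancel_l delta).
- intro Hdelta. apply Cnorm2_eq0 in Hdelta. injection Hdelta as E1 E2.
  apply Hzz'. destruct z, z'; simpl in *. f_equal; lra.
- destruct z, z', q1, q2, C1, C2; unfold delta, Cadd, Cmul, RtoC in *; simpl in *.
  injection H as H1 H2. injection H' as H1' H2'.
  f_equal; lra.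
Qed.

Lemma f_const_around_norm_sum :
  Cnorm2 q2 <> 0 ->
  let s := Cnorm2 q1 + Cnorm2 q2 in
  let r := sqrt (Cnorm2 (Cmul q1 (Cconj q2))) in
  forall x, s - 2 * r < x < s + 2 * r -> f x = Cdot C2 q2 / Cnorm2 q2.
Proof.
intros Hq2 s r x Hx.
set (w := Cmul q1 (Cconj q2)) in r.
set (y := (x - s) / 2).
assert (Hy : y * y < Cnorm2 w).
{ assert (Hr : r * r = Cnorm2 w) by (apply sqrt_sqrt, Cnorm2_ge0).
  unfold y. nra. }
destruct (unit_circle_line_two_points w y Hy) as (z & z' & Hz & Hz' & Hzz' & Ez & Ez').
assert (Hnorm : forall u, Cnorm2 u = 1 -> Cdot u w = y -> Cnorm2 (Cadd q1 (Cmul u q2)) = x).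
{ intros u Hu Eu.
  rewrite Cnorm2_Cadd, Cnorm2_Cmul, Cdot_Cmul_r; fold w.
  rewrite Hu, Eu. unfold y, s. lra. }
pose proof (C2_eq_at_equal_norms z z' Hz Hz' Hzz') as HC2.
rewrite !Hnorm in HC2 by assumption.
specialize (HC2 eq_refl).
rewrite HC2. unfold Cdot, Cnorm2, Cmul, RtoC in *; simpl. field. exact Hq2.
Qed.

End OnUnitCircle.

Lemma identity_on_circle_of_two_frequencies (w1 w2 : R) (f : R -> R) (q1 q2 C1 C2 : Cplx) :
  w1 <> w2 ->
  (forall t : R,
     let u := Cadd (Cmul q1 (Cexpi (- (w1 * t)))) (Cmul q2 (Cexpi (- (w2 * t)))) in
     Cadd (Cmul (Cexpi (- (w1 * t))) C1) (Cmul (Cexpi (- (w2 * t))) C2)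
     = Cmul (RtoC (f (Cnorm2 u))) u) ->
  forall z, Cnorm2 z = 1 ->
  Cadd C1 (Cmul z C2)
  = Cmul (RtoC (f (Cnorm2 (Cadd q1 (Cmul z q2))))) (Cadd q1 (Cmul z q2)).
Proof.
intros Hw Ht z Hz.
destruct (Cexpi_surj z Hz) as [a Ha].
(* At this time the second exponential is the first one rotated by z. *)
set (t := - a / (w2 - w1)).
specialize (Ht t); cbv zeta in Ht.
replace (- (w2 * t)) with (- (w1 * t) + a) in Ht by (unfold t; field; lra).
rewrite Cexpi_add, Ha in Ht.
set (e := Cexpi (- (w1 * t))) in Ht.
assert (He : Cnorm2 e = 1) by apply Cnorm2_Cexpi.
set (v := Cadd q1 (Cmul z q2)).
assert (Ev : Cadd (Cmul q1 e) (Cmul q2 (Cmul e z)) = Cmul e v) by (unfold v; Cplx_ring).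
rewrite Ev, Cnorm2_Cmul, He, Rmult_1_l in Ht.
apply (Cmul_cancel_l e); [lra|].
transitivity (Cadd (Cmul e C1) (Cmul (Cmul e z) C2)); [Cplx_ring|].
rewrite Ht. Cplx_ring.
Qed.

Theorem mainTheorem3 (w1 w2 : R) (c : nat -> R) (d : nat)
  (q1 q2 C1 C2 : Cplx) :
  w1 <> w2 ->
  (1 <= d)%nat ->
  c d <> 0 ->
  (forall t : R,
     let u := Cadd (Cmul q1 (Cexpi (- (w1 * t)))) (Cmul q2 (Cexpi (- (w2 * t)))) in
     Cadd (Cmul (Cexpi (- (w1 * t))) C1) (Cmul (Cexpi (- (w2 * t))) C2)
     = Cmul (RtoC (polyR c d (Cnorm2 u))) u) ->
  q1 = (0, 0) \/ q2 = (0, 0).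
Proof.
intros Hw Hd Hcd Ht.
destruct (Req_dec (Cnorm2 q1) 0) as [Hq1|Hq1]; [left; now apply Cnorm2_eq0|].
destruct (Req_dec (Cnorm2 q2) 0) as [Hq2|Hq2]; [right; now apply Cnorm2_eq0|].
exfalso; apply Hcd.
pose proof (identity_on_circle_of_two_frequencies w1 w2 (polyR c d) q1 q2 C1 C2 Hw Ht)
  as Hcircle.
set (s := Cnorm2 q1 + Cnorm2 q2).
set (r := sqrt (Cnorm2 (Cmul q1 (Cconj q2)))).
assert (Hr : 0 < r).
{ apply sqrt_lt_R0. rewrite Cnorm2_Cmul, Cnorm2_Cconj.
  pose proof (Cnorm2_ge0 q1). pose proof (Cnorm2_ge0 q2).
  apply Rmult_lt_0_compat; lra. }
apply (polyR_lead_eq0_of_const_on_interval c d (s - 2 * r) (s + 2 * r)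
         (Cdot C2 q2 / Cnorm2 q2) Hd); [lra|].
exact (f_const_around_norm_sum (polyR c d) q1 q2 C1 C2 Hcircle Hq2).
Qed.
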